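(* Fix integers $N\ge 2$ and $K\ge 1$. For every $r\in\mathbb{N}^+$, the class $M^{\text{RESCAL}}_{2r+1}$ subsumes the class $M^{\text{TransE}}_r$, i.e. $\pi(\mathcal{M}^{\text{TransE}}_r)\subseteq \pi(\mathcal{M}^{\text{RESCAL}}_{2r+1})$.
   Context: There are $N$ entities and $K$ relations. A score-based model assigns a score $s_k(i,j)\in\mathbb{R}$ to each triple (subject $i$, relation $k$, object $j$), $i,j\in\{1,\dots,N\}$, $k\in\{1,\dots,K\}$; its scoring tensor $\mathcal{S}\in\mathbb{R}^{N\times N\times K}$ has frontal slices $\mathbf{S}_k$ with $[\mathbf{S}_k]_{ij}=s_k(i,j)$. For a real $N\times N$ matrix $\mathbf{S}$, $\pi(\mathbf{S})$ is the matrix of dense ranks: $\pi_{ij}(\mathbf{S})=1+$ (number of distinct values among the entries of $\mathbf{S}$ that are strictly larger than $s_{ij}$); so larger scores get smaller ranks, and $s_{ij}\le s_{i'j'}\iff \pi_{ij}(\mathbf{S})\ge\pi_{i'j'}(\mathbf{S})$. For a tensor, $\pi$ is applied to each frontal slice; for a set $X$, $\pi(X)=\{\pi(x):x\in X\}$. RESCAL of size $r$: parameters $\mathbf{A}\in\mathbb{R}^{N\times r}$ (rows $\mathbf{a}_i$) and $\mathbf{R}_1,\dots,\mathbf{R}_K\in\mathbb{R}^{r\times r}$, score $s_k(i,j)=\mathbf{a}_i^T\mathbf{R}_k\mathbf{a}_j$. TransE of size $r$: parameters $\mathbf{A}\in\mathbb{R}^{N\times r}$ (rows $\mathbf{a}_i$),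 $\mathbf{R}\in\mathbb{R}^{K\times r}$ (rows $\mathbf{r}_k$), score $s_k(i,j)=-\|\mathbf{a}_i+\mathbf{r}_k-\mathbf{a}_j\|_2^2$. For a model type $t$, $\mathcal{M}^t_r$ denotes the set of scoring tensors of all models of type $t$ and size $r$, and $\mathcal{M}^t=\bigcup_{r\in\mathbb{N}^+}\mathcal{M}^t_r$. A class $M^{t_2}$ subsumes $M^{t_1}$ if $\pi(\mathcal{M}^{t_1})\subseteq\pi(\mathcal{M}^{t_2})$ (and analogously for classes of fixed size). *)

From mathcomp Require Import all_boot all_order all_algebra.
Set Implicit Arguments. Unset Strict Implicit. Unset Printing Implicit Defensive.
Import Order.TTheory GRing.Theory Num.Theory.
Local Open Scope ring_scope.

(* Entities are 'I_N, relations are 'I_K.  A scoring tensor is a family of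
   frontal slices  S : 'I_K -> 'M[R]_N  with (S k) i j = s_k(i,j). *)

Definition dense_rank (R : realDomainType) (n : nat) (S : 'M[R]_n) (i j : 'I_n) : nat :=
  (size (undup [seq S p.1 p.2 | p <- enum {: 'I_n * 'I_n} & S i j < S p.1 p.2])).+1.

Definition pi_mx (R : realDomainType) (n : nat) (S : 'M[R]_n) : 'M[nat]_n :=
  \matrix_(i, j) dense_rank S i j.

Definition pi_tensor (R : realDomainType) (n k : nat) (S : 'I_k -> 'M[R]_n)
  : 'I_k -> 'M[nat]_n := fun q => pi_mx (S q).

Definition rescal_tensor (R : realDomainType) (N K r : nat)
  (A : 'M[R]_(N, r)) (Rs : 'I_K -> 'M[R]_r) : 'I_K -> 'M[R]_N :=
  fun q => \matrix_(i, j) (row i A *m Rs q *m (row j A)^T) 0 0.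

Definition transe_tensor (R : realDomainType) (N K r : nat)
  (A : 'M[R]_(N, r)) (Rm : 'M[R]_(K, r)) : 'I_K -> 'M[R]_N :=
  fun q => \matrix_(i, j)
    - \sum_(l < r) (A i l + Rm q l - A j l) ^+ 2.

(* The TransE score is a quadratic polynomial that is bilinear in suitably lifted
   embeddings: expanding the square,
     -|x + rho - y|^2 = 2 x.y - 2 x.rho + 2 rho.y - |x|^2 - |y|^2 - |rho|^2,
   which is  lift x * F rho * (lift y)^T  for  lift x = (x, |x|^2, 1)  and a
   (r+2) x (r+2) matrix  F rho.  So every TransE model of size r is a RESCAL model
   of size r + 2 <= 2r + 1 with literally the same scores, and RESCAL models can be
   padded with zero coordinates without changing their scores. *)
From mathcomp Require Import all_boot all_order all_algebra reals.
From mathcomp Require Import boolp ring zify.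
Set Implicit Arguments. Unset Strict Implicit. Unset Printing Implicit Defensive.
Import Order.TTheory GRing.Theory Num.Theory.
Local Open Scope ring_scope.

Section RowDot.
Variable R : comNzRingType.

Definition rvdot n (u v : 'rV[R]_n) : R := (u *m v^T) 0 0.

Lemma rvdotE n (u v : 'rV[R]_n) : rvdot u v = \sum_l u 0 l * v 0 l.
Proof. by rewrite /rvdot mxE; apply: eq_bigr => l _; rewrite mxE. Qed.

Lemma rvdotC n (u v : 'rV[R]_n) : rvdot u v = rvdot v u.
Proof. by rewrite !rvdotE; apply: eq_bigr => l _; rewrite mulrC. Qed.

Lemma rvdotDl n (u v w : 'rV[R]_n) : rvdot (u + v) w = rvdot u w + rvdot v w.
Proof. by rewrite /rvdot mulmxDl mxE. Qed.

Lemma rvdotNl n (u v : 'rV[R]_n) : rvdot (- u) v = - rvdot u v.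
Proof. by rewrite /rvdot mulNmx mxE. Qed.

Lemma rvdotDr n (u v w : 'rV[R]_n) : rvdot u (v + w) = rvdot u v + rvdot u w.
Proof. by rewrite rvdotC rvdotDl !(rvdotC _ u). Qed.

Lemma rvdotNr n (u v : 'rV[R]_n) : rvdot u (- v) = - rvdot u v.
Proof. by rewrite rvdotC rvdotNl rvdotC. Qed.

Lemma mulmx_tr_rvdot n (u v : 'rV[R]_n) : u *m v^T = (rvdot u v)%:M.
Proof. exact: mx11_scalar. Qed.

Variable r : nat.

Definition transe_lift (x : 'rV[R]_r) : 'rV[R]_(r + 1 + 1) :=
  row_mx (row_mx x (rvdot x x)%:M) 1.

Definition transe_form (rho : 'rV[R]_r) : 'M[R]_(r + 1 + 1) :=
  block_mx (block_mx 2%:M 0 0 0) (col_mx (- 2 *: rho^T) (-1))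
           (row_mx (2 *: rho) (-1)) (- (rvdot rho rho)%:M).

Lemma transe_formE (x rho y : 'rV[R]_r) :
  transe_lift x *m transe_form rho *m (transe_lift y)^T
  = (- rvdot (x + rho - y) (x + rho - y))%:M.
Proof.
rewrite /transe_lift /transe_form !tr_row_mx trmx1 tr_scalar_mx.
rewrite !mul_row_block !mul_row_col !mulmx0 !mul1mx !mulmx1 !addr0 add_row_mx add0r.
rewrite mul_mx_scalar mul_row_col mulmxDl mulNmx mul1mx -!scalemxAl -scalemxAr !mulmxN mulmx1.
rewrite !mulmx_tr_rvdot !scale_scalar_mx -!raddfN -!raddfD /=; congr (_%:M).
rewrite !(rvdotDl, rvdotDr, rvdotNl, rvdotNr).
rewrite (rvdotC rho x) (rvdotC y x) (rvdotC y rho).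
ring.
Qed.

End RowDot.

Section RescalTensor.
Variables (R : realDomainType) (N K : nat).

Lemma rescal_tensorE n (B : 'M[R]_(N, n)) (M : 'I_K -> 'M[R]_n) q i j :
  rescal_tensor B M q i j = (row i B *m M q *m (row j B)^T) 0 0.
Proof. by rewrite mxE. Qed.

Lemma rescal_tensor_mulmx n m (B : 'M[R]_(N, n)) (P : 'M[R]_(n, m))
    (M : 'I_K -> 'M[R]_m) :
  rescal_tensor (B *m P) M = rescal_tensor B (fun q => P *m M q *m P^T).
Proof.
apply: funext => q; apply/matrixP => i j.
by rewrite !rescal_tensorE !row_mul trmx_mul !mulmxA.
Qed.

Lemma rescal_tensor_widen n m (B : 'M[R]_(N, n)) (M : 'I_K -> 'M[R]_n) :
  (n <= m)%N ->
  rescal_tensor (B *m pid_mx n : 'M_(N, m)) (fun q => pid_mx n *m M q *m pid_mx n)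
  = rescal_tensor B M.
Proof.
move=> le_nm; rewrite rescal_tensor_mulmx; congr rescal_tensor.
apply: funext => q.
by rewrite tr_pid_mx !mulmxA pid_mx_id // -!mulmxA pid_mx_id // pid_mx_1 mul1mx mulmx1.
Qed.

Lemma transe_tensor_rescal r (A : 'M[R]_(N, r)) (Rm : 'M[R]_(K, r)) :
  transe_tensor A Rm
  = rescal_tensor (\matrix_i transe_lift (row i A)) (fun q => transe_form (row q Rm)).
Proof.
apply: funext => q; apply/matrixP => i j.
rewrite rescal_tensorE !rowK transe_formE !mxE mulr1n rvdotE.
by congr (- _); apply: eq_bigr => l _; rewrite !mxE expr2.
Qed.

End RescalTensor.

Theorem theorem1 (R : realType) (N K r : nat) :
  (2 <= N)%N -> (1 <= K)%N -> (1 <= r)%N ->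
  forall (A : 'M[R]_(N, r)) (Rm : 'M[R]_(K, r)),
  exists (B : 'M[R]_(N, (2 * r).+1)) (Rs : 'I_K -> 'M[R]_((2 * r).+1)),
    pi_tensor (rescal_tensor B Rs) = pi_tensor (transe_tensor A Rm).
Proof.
move=> _ _ r_gt0 A Rm.
have le_lift : (r + 1 + 1 <= (2 * r).+1)%N by lia.
exists ((\matrix_i transe_lift (row i A)) *m pid_mx (r + 1 + 1)).
exists (fun q => pid_mx (r + 1 + 1) *m transe_form (row q Rm) *m pid_mx (r + 1 + 1)).
by rewrite rescal_tensor_widen // transe_tensor_rescal.
Qed.
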